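(* Let $\mathcal{H}_k$ be a truncated space with orthonormal basis $f_m(z)=(1+b_mz)z^m$, $m\ge0$, where $b_t=0$ for all $t\ge n$; let $U:\mathcal{H}_k\to H^2(\mathbb{D})$ be the unitary with $Uf_m=z^m$, and let $S_n=UM_zU^*$ be the corresponding $n$-shift on $H^2(\mathbb{D})$. Then every closed subspace $\mathcal{M}\subseteq H^2(\mathbb{D})$ invariant under $S_n$ is hyperinvariant for $S_n$, i.e. $X\mathcal{M}\subseteq\mathcal{M}$ for every bounded operator $X$ on $H^2(\mathbb{D})$ with $XS_n=S_nX$.
   Context: Fix $n \ge 1$. $H^2(\mathbb{D})$ is the Hardy space on the open unit disc. A truncated space is a reproducing kernel Hilbert space $\mathcal{H}_k$ of analytic functions on $\mathbb{D}$ (with scalar analytic kernel $k$) such that: $\mathbb{C}[z]\subseteq\mathcal{H}_k$; the multiplication operator $M_z$ is bounded on $\mathcal{H}_k$; and the functions $f_m(z) = (1 + b_m z)z^m$, $m \ge 0$, form an orthonormal basis of $\mathcal{H}_k$, for scalars $\{b_m\}$ with $b_t = 0$ for $t \ge n$. *)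

From Stdlib Require Import Reals.
From Coquelicot Require Import Coquelicot.
Open Scope R_scope.

(* Elements of H^2(D) are identified with their Taylor coefficient sequences,
   i.e. H^2(D) = l^2(N) via g = sum_m a_m z^m. *)
Definition seqC := nat -> C.

Definition in_l2 (a : seqC) : Prop := ex_series (fun m => (Cmod (a m))^2).

Definition sq_norm (a : seqC) : R := Series (fun m => (Cmod (a m))^2).

Definition sub_seq (a c : seqC) : seqC := fun m => Cminus (a m) (c m).
Definition add_seq (a c : seqC) : seqC := fun m => Cplus (a m) (c m).
Definition scal_seq (l : C) (a : seqC) : seqC := fun m => Cmult l (a m).
Definition zero_seq : seqC := fun _ => RtoC 0.

Definition fbasis (b : nat -> C) (m : nat) (z : C) : C :=
  Cmult (Cplus (RtoC 1) (Cmult (b m) z)) (Cpow z m).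

(* [represents b a z w]: the function U^* a = sum_m a_m f_m of H_k takes the
   value w at the point z. *)
Definition represents (b : nat -> C) (a : seqC) (z w : C) : Prop :=
  is_series (fun m => Cmult (a m) (fbasis b m z)) w.

(* S is the n-shift S_n = U M_z U^* on H^2(D) = l^2 : for every a in l^2,
   S a is in l^2 and the function sum_m (S a)_m f_m equals z * sum_m a_m f_m
   on the disc, i.e. U^*(S a) = M_z (U^* a). *)
Definition is_n_shift (b : nat -> C) (S : seqC -> seqC) : Prop :=
  forall a, in_l2 a ->
    in_l2 (S a) /\
    forall z w, Cmod z < 1 -> represents b a z w ->
      represents b (S a) z (Cmult z w).

Definition closed_subspace (M : seqC -> Prop) : Prop :=
  (forall a, M a -> in_l2 a) /\
  M zero_seq /\
  (forall a c, M a -> M c -> M (add_seq a c)) /\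
  (forall l a, M a -> M (scal_seq l a)) /\
  (forall (u : nat -> seqC) a, (forall k, M (u k)) -> in_l2 a ->
     is_lim_seq (fun k => sq_norm (sub_seq (u k) a)) 0 -> M a).

Definition bounded_operator (X : seqC -> seqC) : Prop :=
  (forall a, in_l2 a -> in_l2 (X a)) /\
  (forall a c, in_l2 a -> in_l2 c -> X (add_seq a c) = add_seq (X a) (X c)) /\
  (forall l a, in_l2 a -> X (scal_seq l a) = scal_seq l (X a)) /\
  (exists K, forall a, in_l2 a -> sq_norm (X a) <= K * sq_norm a).

Definition invariant (T : seqC -> seqC) (M : seqC -> Prop) : Prop :=
  forall a, M a -> M (T a).

(* Let V send the coefficients a of [sum_m a_m f_m] to its Taylor coefficients; V and V^-1 are
   bounded because b has finite support, and the identity theorem for power series shows that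
   the n-shift is S_n = V^-1 S V, with S the unilateral shift.  An operator X commuting with S_n
   thus gives Y = V X V^-1 commuting with S, an analytic Toeplitz operator with symbol
   phi = Y e_0.  The Fejer means p_K of phi satisfy |p_K(S)| <= |Y| uniformly in K and
   p_K(S) g -> Y g for every g, so p_K(S_n) h = V^-1 p_K(S) V h -> X h.  As p_K(S_n) h lies in
   every closed S_n-invariant subspace containing h, so does X h. *)

From Stdlib Require Import Reals Lra Lia Psatz FunctionalExtensionality.
From Coquelicot Require Import Coquelicot.
Open Scope R_scope.

(** * Squared moduli and finite sums *)

Lemma Cmod2_plus_le (x y : C) : Cmod (x + y)%C ^ 2 <= 2 * Cmod x ^ 2 + 2 * Cmod y ^ 2.
Proof.
  rewrite !Cmod2_alt; destruct x as [x1 x2], y as [y1 y2]; simpl.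
  pose proof (pow2_ge_0 (x1 - y1)); pose proof (pow2_ge_0 (x2 - y2)); nra.
Qed.

Lemma Cmod2_minus_le (x y : C) : Cmod (x - y)%C ^ 2 <= 2 * Cmod x ^ 2 + 2 * Cmod y ^ 2.
Proof.
  rewrite !Cmod2_alt; destruct x as [x1 x2], y as [y1 y2]; simpl.
  pose proof (pow2_ge_0 (x1 + y1)); pose proof (pow2_ge_0 (x2 + y2)); nra.
Qed.

Lemma Cmod2_mult (x y : C) : Cmod (x * y)%C ^ 2 = Cmod x ^ 2 * Cmod y ^ 2.
Proof. rewrite Cmod_mult; apply Rpow_mult_distr. Qed.

Lemma Cmod2_R (r : R) : Cmod r ^ 2 = r ^ 2.
Proof. rewrite Cmod_R; apply pow2_abs. Qed.

(* The inductive step of the Cauchy-Schwarz bound [csum_Cmod2_le]. *)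
Lemma Cmod2_plus_weighted_le (s w : C) (k Q : R) : 0 <= k -> 0 <= Q ->
  Cmod s ^ 2 <= k * Q -> Cmod (s + w)%C ^ 2 <= (k + 1) * (Q + Cmod w ^ 2).
Proof.
  intros Hk HQ H; rewrite !Cmod2_alt in *.
  destruct s as [s1 s2], w as [w1 w2]; simpl in *.
  destruct (Req_dec k 0) as [->|Hk0].
  - assert (s1 = 0) by nra; assert (s2 = 0) by nra; subst; nra.
  - assert (2 * s1 * w1 * k <= s1 ^ 2 + k ^ 2 * w1 ^ 2)
      by (pose proof (pow2_ge_0 (s1 - k * w1)); nra).
    assert (2 * s2 * w2 * k <= s2 ^ 2 + k ^ 2 * w2 ^ 2)
      by (pose proof (pow2_ge_0 (s2 - k * w2)); nra).
    assert (2 * s1 * w1 + 2 * s2 * w2 <= Q + k * (w1 ^ 2 + w2 ^ 2))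
      by (apply (Rmult_le_reg_r k); nra).
    nra.
Qed.

Fixpoint rsum (f : nat -> R) (N : nat) : R :=
  match N with O => 0 | S k => rsum f k + f k end.

Fixpoint csum (f : nat -> C) (N : nat) : C :=
  match N with O => RtoC 0 | S k => (csum f k + f k)%C end.

Lemma sum_n_rsum (f : nat -> R) N : sum_n f N = rsum f (S N).
Proof.
  induction N; simpl; [rewrite sum_O; ring|].
  rewrite sum_Sn, IHN; reflexivity.
Qed.

Lemma rsum_ext f g N : (forall k, (k < N)%nat -> f k = g k) -> rsum f N = rsum g N.
Proof.
  induction N; intros H; simpl; [reflexivity|].
  rewrite H by lia; rewrite IHN by (intros; apply H; lia); reflexivity.
Qed.

Lemma rsum_le f g N : (forall k, (k < N)%nat -> f k <= g k) -> rsum f N <= rsum g N.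
Proof.
  induction N; intros H; simpl; [lra|].
  assert (f N <= g N) by (apply H; lia).
  assert (rsum f N <= rsum g N) by (apply IHN; intros; apply H; lia).
  lra.
Qed.

Lemma rsum_ge0 f N : (forall k, 0 <= f k) -> 0 <= rsum f N.
Proof. intros H; induction N; simpl; [lra|]; specialize (H N); lra. Qed.

Lemma rsum_le_mono f N M : (forall k, 0 <= f k) -> (N <= M)%nat -> rsum f N <= rsum f M.
Proof. intros H HNM; induction HNM; simpl; [lra|]; specialize (H m); lra. Qed.

Lemma rsum_plus f g N : rsum (fun k => f k + g k) N = rsum f N + rsum g N.
Proof. induction N; simpl; lra. Qed.

Lemma rsum_scal c f N : rsum (fun k => c * f k) N = c * rsum f N.
Proof. induction N; simpl; [ring|]; rewrite IHN; ring. Qed.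

Lemma rsum_const c N : rsum (fun _ => c) N = INR N * c.
Proof. induction N; simpl rsum; [simpl; ring|]; rewrite IHN, S_INR; ring. Qed.

Lemma rsum_switch (u : nat -> nat -> R) N M :
  rsum (fun i => rsum (u i) M) N = rsum (fun j => rsum (fun i => u i j) N) M.
Proof.
  induction N; simpl; [induction M; simpl; lra|].
  rewrite IHN, <- rsum_plus; reflexivity.
Qed.

Lemma rsum_split f i K : rsum f (i + K) = rsum f i + rsum (fun s => f (i + s)%nat) K.
Proof.
  induction K; [rewrite Nat.add_0_r; simpl; ring|].
  rewrite Nat.add_succ_r; simpl; rewrite IHK; ring.
Qed.

Lemma rsum_eventually_0 f N M : (forall k, (N <= k)%nat -> f k = 0) -> (N <= M)%nat ->
  rsum f M = rsum f N.
Proof. intros H HM; induction HM; simpl; [reflexivity|]; rewrite IHHM, H by lia; ring. Qed.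

Lemma rsum_indicator_lt f B A :
  rsum (fun k => if (k <? B)%nat then f k else 0) A = rsum f (Nat.min A B).
Proof.
  induction A; [reflexivity|]; cbn [rsum]; rewrite IHA.
  destruct (Nat.ltb_spec A B).
  - rewrite (Nat.min_l A B), (Nat.min_l (S A) B) by lia; reflexivity.
  - replace (Nat.min (S A) B) with (Nat.min A B) by lia; ring.
Qed.

Lemma rsum_indicator_window f i K A : (i + K <= A)%nat ->
  rsum (fun a => if andb (i <=? a)%nat (a <? i + K)%nat then f a else 0) A
  = rsum (fun s => f (i + s)%nat) K.
Proof.
  intros H; rewrite (rsum_eventually_0 _ (i + K) A), rsum_split; [| |exact H].
  - rewrite (rsum_ext _ (fun _ => 0)), rsum_const, Rmult_0_r, Rplus_0_l.
    + apply rsum_ext; intros s Hs.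
      destruct (Nat.leb_spec i (i + s)), (Nat.ltb_spec (i + s) (i + K)); [reflexivity|lia..].
    + intros a Ha; destruct (Nat.leb_spec i a); [lia|reflexivity].
  - intros a Ha; destruct (Nat.leb_spec i a), (Nat.ltb_spec a (i + K)); [lia|reflexivity..].
Qed.

Lemma csum_ext f g N : (forall k, (k < N)%nat -> f k = g k) -> csum f N = csum g N.
Proof.
  induction N; intros H; simpl; [reflexivity|].
  rewrite H by lia; rewrite IHN by (intros; apply H; lia); reflexivity.
Qed.

Lemma csum_plus f g N : csum (fun k => f k + g k)%C N = (csum f N + csum g N)%C.
Proof. induction N; simpl; [ring|]; rewrite IHN; ring. Qed.

Lemma csum_minus f g N : csum (fun k => f k - g k)%C N = (csum f N - csum g N)%C.
Proof. induction N; simpl; [ring|]; rewrite IHN; ring. Qed.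

Lemma csum_scal c f N : csum (fun k => c * f k)%C N = (c * csum f N)%C.
Proof. induction N; simpl; [ring|]; rewrite IHN; ring. Qed.

Lemma csum_0 f N : (forall k, (k < N)%nat -> f k = RtoC 0) -> csum f N = RtoC 0.
Proof.
  intros H; rewrite (csum_ext f (fun _ => RtoC 0)) by exact H; clear H.
  induction N; simpl; [reflexivity|]; rewrite IHN; ring.
Qed.

Lemma csum_const c N : csum (fun _ => c) N = (INR N * c)%C.
Proof. induction N; simpl csum; [simpl; ring|]; rewrite IHN, S_INR, RtoC_plus; ring. Qed.

Lemma csum_split f i K : csum f (i + K) = (csum f i + csum (fun s => f (i + s)%nat) K)%C.
Proof.
  induction K; [rewrite Nat.add_0_r; simpl; ring|].
  rewrite Nat.add_succ_r; simpl; rewrite IHK; ring.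
Qed.

Lemma csum_rev f i : csum (fun j => f (i - j)%nat) (S i) = csum f (S i).
Proof.
  assert (first : forall g M, csum g (S M) = (g O + csum (fun k => g (S k)) M)%C).
  { intros g M; induction M; [simpl; ring|].
    change (csum g (S (S M))) with (csum g (S M) + g (S M))%C; rewrite IHM; simpl; ring. }
  induction i; [reflexivity|].
  rewrite first, (csum_ext _ (fun k => f (i - k)%nat)) by reflexivity.
  rewrite IHi; change (csum f (S (S i))) with (csum f (S i) + f (S i))%C; simpl (S i - 0)%nat; ring.
Qed.

Lemma csum_indicator_lt f B A :
  csum (fun k => if (k <? B)%nat then f k else RtoC 0) A = csum f (Nat.min A B).
Proof.
  induction A; [reflexivity|]; cbn [csum]; rewrite IHA.
  destruct (Nat.ltb_spec A B).
  - rewrite (Nat.min_l A B), (Nat.min_l (S A) B) by lia; reflexivity.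
  - replace (Nat.min (S A) B) with (Nat.min A B) by lia; ring.
Qed.

Lemma csum_indicator_eq f c A :
  csum (fun k => if (k =? c)%nat then f k else RtoC 0) A = if (c <? A)%nat then f c else RtoC 0.
Proof.
  induction A; [reflexivity|]; cbn [csum]; rewrite IHA.
  destruct (Nat.eqb_spec A c), (Nat.ltb_spec c A), (Nat.ltb_spec c (S A)); subst; try lia; ring.
Qed.

Lemma csum_switch (u : nat -> nat -> C) N M :
  csum (fun i => csum (u i) M) N = csum (fun j => csum (fun i => u i j) N) M.
Proof.
  induction N; simpl; [rewrite csum_0; reflexivity|].
  rewrite IHN, <- csum_plus; reflexivity.
Qed.

Lemma csum_Cmod2_le (z : nat -> C) K : Cmod (csum z K) ^ 2 <= INR K * rsum (fun s => Cmod (z s) ^ 2) K.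
Proof.
  induction K; [simpl; rewrite Cmod_0; lra|].
  simpl csum; simpl rsum; rewrite S_INR.
  apply Cmod2_plus_weighted_le; [apply pos_INR| |exact IHK].
  apply rsum_ge0; intros; apply pow2_ge_0.
Qed.

(** * Square-summable sequences *)

Section NonnegSeries.
Variable u : nat -> R.
Hypothesis u_ge0 : forall k, 0 <= u k.

Lemma rsum_le_Series N : ex_series u -> rsum u N <= Series u.
Proof.
  intros Hu; apply Series_correct in Hu.
  assert (Hlim : is_lim_seq (fun N => rsum u (S N)) (Series u))
    by (eapply is_lim_seq_ext; [intros; apply sum_n_rsum|exact Hu]).
  apply (Rle_trans _ (rsum u (S N))).
  - simpl; specialize (u_ge0 N); lra.
  - apply (is_lim_seq_incr_compare _ _ Hlim); intros; simpl; specialize (u_ge0 (S n)); lra.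
Qed.

Lemma ex_series_rsum_bounded B : (forall N, rsum u N <= B) -> ex_series u /\ Series u <= B.
Proof.
  intros HB.
  assert (Hincr : forall N, rsum u (S N) <= rsum u (S (S N)))
    by (intros; simpl; specialize (u_ge0 (S N)); lra).
  destruct (ex_finite_lim_seq_incr _ B Hincr (fun N => HB (S N))) as [l Hl].
  assert (Hs : is_series u l)
    by exact (is_lim_seq_ext _ _ _ (fun N => eq_sym (sum_n_rsum u N)) Hl).
  split; [exists l; exact Hs|].
  rewrite (is_series_unique _ _ Hs).
  apply (is_lim_seq_le (fun N => rsum u (S N)) (fun _ => B) l B); auto using is_lim_seq_const.
Qed.

End NonnegSeries.

Lemma Series_minus_rsum_small (u : nat -> R) eps : ex_series u -> 0 < eps ->
  exists N, Series u - rsum u N <= eps.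
Proof.
  intros Hu Heps; apply Series_correct in Hu.
  change (is_lim_seq (sum_n u) (Series u)) in Hu; apply is_lim_seq_spec in Hu.
  destruct (Hu (mkposreal eps Heps)) as [N HN]; exists (S N).
  specialize (HN N (Nat.le_refl _)); simpl in HN; rewrite sum_n_rsum in HN.
  apply Rabs_def2 in HN; lra.
Qed.

Lemma sq_norm_rsum_bounded (a : seqC) B : (forall N, rsum (fun m => Cmod (a m) ^ 2) N <= B) ->
  in_l2 a /\ sq_norm a <= B.
Proof. apply ex_series_rsum_bounded; intros; apply pow2_ge_0. Qed.

Lemma rsum_le_sq_norm (a : seqC) N : in_l2 a -> rsum (fun m => Cmod (a m) ^ 2) N <= sq_norm a.
Proof. apply rsum_le_Series; intros; apply pow2_ge_0. Qed.

Lemma sq_norm_ge0 (a : seqC) : in_l2 a -> 0 <= sq_norm a.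
Proof. intros Ha; exact (rsum_le_sq_norm a 0 Ha). Qed.

Lemma Cmod2_le_sq_norm (a : seqC) m : in_l2 a -> Cmod (a m) ^ 2 <= sq_norm a.
Proof.
  intros Ha; apply (Rle_trans _ (rsum (fun m => Cmod (a m) ^ 2) (S m))); [|apply rsum_le_sq_norm, Ha].
  cbn [rsum]; pose proof (rsum_ge0 (fun m => Cmod (a m) ^ 2) m (fun k => pow2_ge_0 (Cmod (a k)))); lra.
Qed.

Lemma in_l2_add (a c : seqC) : in_l2 a -> in_l2 c ->
  in_l2 (add_seq a c) /\ sq_norm (add_seq a c) <= 2 * sq_norm a + 2 * sq_norm c.
Proof.
  intros Ha Hc; apply sq_norm_rsum_bounded; intros N.
  apply (Rle_trans _ (rsum (fun m => 2 * Cmod (a m) ^ 2 + 2 * Cmod (c m) ^ 2) N)).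
  - apply rsum_le; intros; apply Cmod2_plus_le.
  - rewrite rsum_plus, !rsum_scal.
    pose proof (rsum_le_sq_norm a N Ha); pose proof (rsum_le_sq_norm c N Hc); lra.
Qed.

Lemma in_l2_sub (a c : seqC) : in_l2 a -> in_l2 c ->
  in_l2 (sub_seq a c) /\ sq_norm (sub_seq a c) <= 2 * sq_norm a + 2 * sq_norm c.
Proof.
  intros Ha Hc; apply sq_norm_rsum_bounded; intros N.
  apply (Rle_trans _ (rsum (fun m => 2 * Cmod (a m) ^ 2 + 2 * Cmod (c m) ^ 2) N)).
  - apply rsum_le; intros; apply Cmod2_minus_le.
  - rewrite rsum_plus, !rsum_scal.
    pose proof (rsum_le_sq_norm a N Ha); pose proof (rsum_le_sq_norm c N Hc); lra.
Qed.

Lemma in_l2_scal (l : C) (a : seqC) : in_l2 a ->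
  in_l2 (scal_seq l a) /\ sq_norm (scal_seq l a) <= Cmod l ^ 2 * sq_norm a.
Proof.
  intros Ha; apply sq_norm_rsum_bounded; intros N; unfold scal_seq.
  rewrite (rsum_ext _ (fun m => Cmod l ^ 2 * Cmod (a m) ^ 2)) by (intros; apply Cmod2_mult).
  rewrite rsum_scal; apply Rmult_le_compat_l; [apply pow2_ge_0|apply rsum_le_sq_norm, Ha].
Qed.

Lemma in_l2_finite_support (a : seqC) N : (forall m, (N <= m)%nat -> a m = RtoC 0) ->
  in_l2 a /\ sq_norm a = rsum (fun m => Cmod (a m) ^ 2) N.
Proof.
  intros Ha.
  assert (Hbound : forall M, rsum (fun m => Cmod (a m) ^ 2) M <= rsum (fun m => Cmod (a m) ^ 2) N).
  { intros M; destruct (Nat.le_gt_cases M N).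
    - apply rsum_le_mono; [intros; apply pow2_ge_0|assumption].
    - rewrite (rsum_eventually_0 _ N M); [lra| |lia].
      intros m Hm; rewrite Ha by exact Hm; rewrite Cmod_0; ring. }
  destruct (sq_norm_rsum_bounded a _ Hbound) as [Hl2 Hle]; split; [exact Hl2|].
  pose proof (rsum_le_sq_norm a N Hl2); lra.
Qed.

Lemma in_l2_zero : in_l2 zero_seq /\ sq_norm zero_seq = 0.
Proof.
  destruct (in_l2_finite_support zero_seq 0) as [H1 H2]; [reflexivity|].
  split; [exact H1|exact H2].
Qed.

Lemma sq_norm_modify_head (t a : seqC) N (c : nat -> R) : in_l2 a ->
  (forall m, (N <= m)%nat -> t m = a m) -> (forall m, 0 <= c m) ->
  (forall m, (m < N)%nat -> Cmod (t m) ^ 2 <= c m * sq_norm a) ->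
  in_l2 t /\ sq_norm t <= (1 + rsum c N) * sq_norm a.
Proof.
  intros Ha Htail Hc0 Hhead; apply sq_norm_rsum_bounded; intros M.
  apply (Rle_trans _ (rsum (fun m => Cmod (a m) ^ 2
                                     + (if (m <? N)%nat then sq_norm a * c m else 0)) M)).
  - apply rsum_le; intros m _; destruct (Nat.ltb_spec m N) as [Hm|Hm].
    + specialize (Hhead m Hm); pose proof (pow2_ge_0 (Cmod (a m))); lra.
    + rewrite Htail by lia; lra.
  - rewrite rsum_plus, rsum_indicator_lt, rsum_scal.
    pose proof (rsum_le_sq_norm a M Ha); pose proof (sq_norm_ge0 a Ha).
    assert (rsum c (Nat.min M N) <= rsum c N) by (apply rsum_le_mono; [exact Hc0|lia]).
    nra.
Qed.

Definition shift (a : seqC) : seqC := fun m => match m with O => RtoC 0 | S k => a k end.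

Definition shiftn (d : nat) (a : seqC) : seqC :=
  fun m => if (d <=? m)%nat then a (m - d)%nat else RtoC 0.

Definition delta0 : seqC := fun m => if (m =? 0)%nat then RtoC 1 else RtoC 0.

Definition trunc (N : nat) (a : seqC) : seqC := fun m => if (m <? N)%nat then a m else RtoC 0.

Definition l2_bounded (T : seqC -> seqC) (K : R) : Prop :=
  0 <= K /\ forall a, in_l2 a -> in_l2 (T a) /\ sq_norm (T a) <= K * sq_norm a.

Lemma l2_bounded_comp T T' K K' : l2_bounded T K -> l2_bounded T' K' ->
  l2_bounded (fun a => T (T' a)) (K * K').
Proof.
  intros [HK HT] [HK' HT']; split; [nra|]; intros a Ha.
  destruct (HT' a Ha) as [Ha' Hle']; destruct (HT _ Ha') as [Ha'' Hle].
  split; [exact Ha''|]; apply (Rle_trans _ _ _ Hle); rewrite Rmult_assoc.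
  apply Rmult_le_compat_l; assumption.
Qed.

Lemma shiftn_0 a : shiftn 0 a = a.
Proof. apply functional_extensionality; intros m; unfold shiftn; simpl; f_equal; lia. Qed.

Lemma shiftn_S d a : shiftn (S d) a = shift (shiftn d a).
Proof. apply functional_extensionality; intros [|k]; reflexivity. Qed.

Lemma shift_l2_bounded : l2_bounded shift 1.
Proof.
  split; [lra|]; intros a Ha; apply sq_norm_rsum_bounded; intros [|N].
  - simpl; rewrite Rmult_1_l; apply sq_norm_ge0, Ha.
  - change (rsum ?f (S N)) with (rsum f (1 + N)); rewrite rsum_split.
    rewrite (rsum_ext (fun s => Cmod (shift a (1 + s)%nat) ^ 2) (fun s => Cmod (a s) ^ 2))
      by reflexivity.
    pose proof (rsum_le_sq_norm a N Ha).
    cbn [rsum shift]; rewrite Cmod_0; lra.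
Qed.

Lemma shiftn_l2_bounded d : l2_bounded (shiftn d) 1.
Proof.
  induction d.
  - split; [lra|]; intros a Ha; rewrite shiftn_0; split; [exact Ha|lra].
  - replace 1 with (1 * 1) by ring.
    eapply l2_bounded_comp in IHd; [|exact shift_l2_bounded].
    destruct IHd as [Hone Hd]; split; [exact Hone|]; intros a; rewrite shiftn_S; apply Hd.
Qed.

Lemma in_l2_delta0 : in_l2 delta0.
Proof.
  apply (in_l2_finite_support delta0 1); intros m Hm.
  unfold delta0; destruct (Nat.eqb_spec m 0); [lia|reflexivity].
Qed.

Lemma in_l2_trunc N a : in_l2 (trunc N a).
Proof.
  apply (in_l2_finite_support _ N); intros m Hm.
  unfold trunc; destruct (Nat.ltb_spec m N); [lia|reflexivity].
Qed.

Lemma trunc_S N a : trunc (S N) a = add_seq (trunc N a) (scal_seq (a N) (shiftn N delta0)).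
Proof.
  apply functional_extensionality; intros m; unfold trunc, add_seq, scal_seq, shiftn, delta0.
  destruct (Nat.ltb_spec m (S N)), (Nat.ltb_spec m N), (Nat.leb_spec N m);
    try destruct (Nat.eqb_spec (m - N) 0); try lia; try ring.
  replace m with N by lia; ring.
Qed.

Lemma rsum_tail_le_sq_norm (a : seqC) N M : in_l2 a ->
  rsum (fun m => if (m <? N)%nat then 0 else Cmod (a m) ^ 2) M
  <= sq_norm a - rsum (fun m => Cmod (a m) ^ 2) N.
Proof.
  intros Ha; set (f := fun m => Cmod (a m) ^ 2).
  set (g := fun m => if (m <? N)%nat then 0 else f m).
  assert (Hg0 : forall m, 0 <= g m)
    by (intros m; unfold g, f; destruct (m <? N)%nat; [lra|apply pow2_ge_0]).
  assert (Hsplit : rsum f (Nat.max M N) = rsum g (Nat.max M N) + rsum f N).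
  { replace (rsum f N) with (rsum f (Nat.min (Nat.max M N) N)) by (f_equal; lia).
    rewrite <- rsum_indicator_lt, <- rsum_plus.
    apply rsum_ext; intros m _; unfold g; destruct (m <? N)%nat; ring. }
  assert (rsum g M <= rsum g (Nat.max M N)) by (apply rsum_le_mono; [exact Hg0|lia]).
  assert (rsum f (Nat.max M N) <= sq_norm a) by exact (rsum_le_sq_norm a _ Ha).
  unfold g, f in *; lra.
Qed.

Lemma sq_norm_sub_trunc N a : in_l2 a ->
  in_l2 (sub_seq a (trunc N a)) /\
  sq_norm (sub_seq a (trunc N a)) <= sq_norm a - rsum (fun m => Cmod (a m) ^ 2) N.
Proof.
  intros Ha; apply sq_norm_rsum_bounded; intros M.
  rewrite (rsum_ext _ (fun m => if (m <? N)%nat then 0 else Cmod (a m) ^ 2));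
    [apply rsum_tail_le_sq_norm, Ha|].
  intros m _; unfold sub_seq, trunc; destruct (m <? N)%nat.
  - replace (a m - a m)%C with (RtoC 0) by ring; rewrite Cmod_0; ring.
  - replace (a m - 0)%C with (a m) by ring; reflexivity.
Qed.

Definition l2_cvg (u : nat -> seqC) (a : seqC) : Prop :=
  forall eps, 0 < eps -> exists K0, forall K, (K0 <= K)%nat -> sq_norm (sub_seq (u K) a) <= eps.

Lemma l2_cvg_is_lim_seq u a : (forall K, in_l2 (sub_seq (u K) a)) -> l2_cvg u a ->
  is_lim_seq (fun K => sq_norm (sub_seq (u K) a)) 0.
Proof.
  intros Hl2 Hcvg; apply is_lim_seq_spec; intros eps.
  destruct (Hcvg (eps / 2)) as [K0 HK0]; [pose proof (cond_pos eps); lra|].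
  exists K0; intros K HK; specialize (HK0 K HK); pose proof (sq_norm_ge0 _ (Hl2 K)).
  rewrite Rminus_0_r, Rabs_pos_eq by assumption; pose proof (cond_pos eps); lra.
Qed.

(** * Power series *)

Lemma Cmod_le_sqrt_sq_norm (a : seqC) m : in_l2 a -> Cmod (a m) <= sqrt (sq_norm a).
Proof.
  intros Ha; rewrite <- (sqrt_pow2 (Cmod (a m))) by apply Cmod_ge_0.
  apply sqrt_le_1_alt, Cmod2_le_sq_norm, Ha.
Qed.

Lemma ex_series_power_l2 (c : seqC) (z : C) : in_l2 c -> Cmod z < 1 ->
  ex_series (fun m => c m * z ^ m)%C.
Proof.
  intros Hc Hz.
  apply (@ex_series_le C_AbsRing C_CompleteNormedModule _ (fun m => sqrt (sq_norm c) * Cmod z ^ m)).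
  - intros m; change norm with Cmod; rewrite Cmod_mult, Cmod_pow.
    apply Rmult_le_compat_r; [apply pow_le, Cmod_ge_0|apply Cmod_le_sqrt_sq_norm, Hc].
  - destruct (ex_series_geom (Cmod z)) as [l Hl]; [rewrite Rabs_pos_eq; [exact Hz|apply Cmod_ge_0]|].
    exists (sqrt (sq_norm c) * l); exact (is_series_scal_l (sqrt (sq_norm c)) _ _ Hl).
Qed.

Lemma is_series_power_shift (e : seqC) (z w : C) : is_series (fun m => e m * z ^ m)%C w ->
  is_series (fun m => shift e m * z ^ m)%C (z * w)%C.
Proof.
  intros H; apply is_series_decr_1.
  match goal with |- is_series _ ?l => replace l with (scal z w)
    by (change (z * w = z * w + - (0 * 1))%C; ring) end.
  eapply is_series_ext; [|exact (is_series_scal_l z _ _ H)].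
  intros k; change (z * (e k * z ^ k) = e k * (z * z ^ k))%C; ring.
Qed.

Lemma Cmod_series_le (a : nat -> C) (l : C) (r : nat -> R) (L : R) :
  is_series a l -> (forall k, Cmod (a k) <= r k) -> is_series r L -> Cmod l <= L.
Proof.
  intros Ha Hr HL.
  assert (Hpartial : forall N, Cmod (sum_n a N) <= sum_n r N).
  { induction N; [rewrite !sum_O; apply Hr|rewrite !sum_Sn].
    apply (Rle_trans _ _ _ (Cmod_triangle _ _)); specialize (Hr (S N)).
    change (plus (sum_n r N) (r (S N))) with (sum_n r N + r (S N)); lra. }
  assert (Hlim : is_lim_seq (fun N => Cmod (sum_n a N)) (Cmod l))
    by (eapply filterlim_comp;
        [exact Ha|exact (filterlim_norm (K := C_AbsRing) (V := C_NormedModule) l)]).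
  exact (is_lim_seq_le _ _ (Cmod l) L Hpartial Hlim HL).
Qed.

Lemma power_series_coef_bound (e : seqC) m x : in_l2 e -> 0 < x < 1 ->
  (forall j, (j < m)%nat -> e j = RtoC 0) -> is_series (fun k => e k * x ^ k)%C (RtoC 0) ->
  Cmod (e m) <= sqrt (sq_norm e) * x / (1 - x).
Proof.
  intros He Hx Hlow Hsum; set (B := sqrt (sq_norm e)).
  assert (Hfrom_m : is_series (fun k => e (m + k)%nat * x ^ (m + k))%C (RtoC 0)).
  { destruct m; [exact Hsum|].
    apply (is_series_incr_n (fun k => e k * x ^ k)%C); [lia|].
    rewrite (sum_n_ext_loc _ (fun _ => zero)).
    - unfold sum_n; rewrite sum_n_m_const_zero, plus_zero_r; exact Hsum.
    - intros k Hk; rewrite Hlow by (simpl in Hk; lia); change (0 * x ^ k = 0)%C; ring. }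
  assert (Hxm : x ^ m <> 0) by (apply pow_nonzero; lra).
  assert (Hdiv : is_series (fun k => e (m + k)%nat * x ^ k)%C (RtoC 0)).
  { replace (RtoC 0) with (scal (RtoC (/ x ^ m)) (RtoC 0)) by (change (RtoC (/ x ^ m) * 0 = 0)%C; ring).
    eapply is_series_ext; [|exact (is_series_scal_l (RtoC (/ x ^ m)) _ _ Hfrom_m)].
    intros k; change (RtoC (/ x ^ m) * (e (m + k)%nat * x ^ (m + k)) = e (m + k)%nat * x ^ k)%C.
    rewrite Cpow_add_r, <- RtoC_pow.
    transitivity (RtoC (/ x ^ m * x ^ m) * (e (m + k)%nat * x ^ k))%C; [rewrite RtoC_mult; ring|].
    rewrite Rinv_l by exact Hxm; ring. }
  assert (Htail : is_series (fun k => e (m + S k)%nat * x ^ S k)%C (- e m)%C).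
  { apply (is_series_incr_1 (fun k => e (m + k)%nat * x ^ k)%C).
    match goal with |- is_series _ ?l => replace l with (RtoC 0); [exact Hdiv|] end.
    rewrite Nat.add_0_r; change (RtoC 0 = - e m + e m * 1)%C; ring. }
  assert (Hgeom : is_series (fun k => B * x ^ S k) (B * x / (1 - x))).
  { assert (Hx1 : Rabs x < 1) by (rewrite Rabs_pos_eq; lra).
    replace (B * x / (1 - x)) with (scal (B * x) (/ (1 - x)))
      by (change (B * x * / (1 - x) = B * x / (1 - x)); field; lra).
    eapply is_series_ext; [|exact (is_series_scal_l (B * x) _ _ (is_series_geom x Hx1))].
    intros k; change (B * x * x ^ k = B * x ^ S k); simpl; ring. }
  rewrite <- Cmod_opp; apply (Cmod_series_le _ _ (fun k => B * x ^ S k) _ Htail); [|exact Hgeom].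
  intros k; rewrite Cmod_mult, Cmod_pow, Cmod_R, Rabs_pos_eq by lra.
  apply Rmult_le_compat_r; [apply pow_le; lra|apply Cmod_le_sqrt_sq_norm, He].
Qed.

Lemma le_ratio_near0_eq0 (t B : R) : 0 <= t -> 0 <= B ->
  (forall x, 0 < x < 1 -> t <= B * x / (1 - x)) -> t = 0.
Proof.
  intros Ht HB Hle; destruct (Rle_lt_or_eq_dec _ _ Ht) as [Htpos|]; [exfalso|congruence].
  set (x := t / (2 * (B + t))).
  assert (Hx : 0 < x <= 1 / 2).
  { unfold x; split; [apply Rdiv_lt_0_compat; lra|].
    apply Rmult_le_reg_r with (2 * (B + t)); [lra|]; field_simplify; lra. }
  specialize (Hle x ltac:(lra)).
  assert (t * (1 - x) <= B * x).
  { apply (Rmult_le_compat_r (1 - x)) in Hle; [|lra].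
    replace (B * x / (1 - x) * (1 - x)) with (B * x) in Hle by (field; lra); exact Hle. }
  assert (x * (B + t) = t / 2) by (unfold x; field; lra).
  nra.
Qed.

Lemma power_series_eq0_coef (e : seqC) : in_l2 e ->
  (forall x, 0 < x < 1 -> is_series (fun k => e k * x ^ k)%C (RtoC 0)) -> forall m, e m = RtoC 0.
Proof.
  intros He Hsum.
  enough (Hlow : forall m j, (j < m)%nat -> e j = RtoC 0) by (intros m; apply (Hlow (S m)); lia).
  induction m as [|m IH]; intros j Hj; [lia|].
  destruct (Nat.eq_dec j m) as [->|]; [|apply IH; lia].
  apply Cmod_eq_0, (le_ratio_near0_eq0 _ (sqrt (sq_norm e))); [apply Cmod_ge_0|apply sqrt_pos|].
  intros x Hx; apply power_series_coef_bound; auto.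
Qed.

(** * The n-shift as a conjugate of the shift *)

(* The Taylor coefficients of [sum_m a m * fbasis b m], as [fbasis b m z = z^m + b m z^(m+1)]. *)
Definition taylor (b : nat -> C) (a : seqC) : seqC :=
  fun m => match m with O => a O | S k => (a (S k) + b k * a k)%C end.

Fixpoint taylor_inv (b : nat -> C) (c : seqC) (m : nat) : C :=
  match m with O => c O | S k => (c (S k) - b k * taylor_inv b c k)%C end.

Lemma taylor_invK b c : taylor b (taylor_inv b c) = c.
Proof. apply functional_extensionality; intros [|k]; simpl; [reflexivity|ring]. Qed.

Lemma taylorK b a : taylor_inv b (taylor b a) = a.
Proof.
  apply functional_extensionality; intros m; induction m; simpl; [reflexivity|].
  rewrite IHm; ring.
Qed.

Lemma taylor_add b a c : taylor b (add_seq a c) = add_seq (taylor b a) (taylor b c).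
Proof. apply functional_extensionality; intros [|k]; unfold add_seq; simpl; [reflexivity|ring]. Qed.

Lemma taylor_scal b l a : taylor b (scal_seq l a) = scal_seq l (taylor b a).
Proof. apply functional_extensionality; intros [|k]; unfold scal_seq; simpl; [reflexivity|ring]. Qed.

Lemma taylor_inv_add b a c : taylor_inv b (add_seq a c) = add_seq (taylor_inv b a) (taylor_inv b c).
Proof.
  apply functional_extensionality; intros m; unfold add_seq; induction m; simpl; [reflexivity|].
  rewrite IHm; ring.
Qed.

Lemma taylor_inv_scal b l a : taylor_inv b (scal_seq l a) = scal_seq l (taylor_inv b a).
Proof.
  apply functional_extensionality; intros m; unfold scal_seq; induction m; simpl; [reflexivity|].
  rewrite IHm; ring.
Qed.

Lemma taylor_inv_sub b a c : taylor_inv b (sub_seq a c) = sub_seq (taylor_inv b a) (taylor_inv b c).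
Proof.
  apply functional_extensionality; intros m; unfold sub_seq; induction m; simpl; [reflexivity|].
  rewrite IHm; ring.
Qed.

Lemma taylor_inv_csum b (F : nat -> seqC) K :
  taylor_inv b (fun i => csum (fun d => F d i) K) = fun i => csum (fun d => taylor_inv b (F d) i) K.
Proof.
  induction K.
  - apply functional_extensionality; intros m; simpl csum.
    induction m; simpl; [reflexivity|]; rewrite IHm; ring.
  - change (fun i => csum (fun d => F d i) (S K))
      with (add_seq (fun i => csum (fun d => F d i) K) (F K)).
    rewrite taylor_inv_add, IHK; reflexivity.
Qed.

Lemma taylor_partial_sum b c z N :
  sum_n (fun m => c m * fbasis b m z)%C N
  = (sum_n (fun m => taylor b c m * z ^ m)%C N + c N * b N * z ^ S N)%C.
Proof.
  unfold fbasis; induction N; [rewrite !sum_O; simpl; ring|].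
  rewrite !sum_Sn; change (plus ?x ?y) with (x + y)%C; rewrite IHN; simpl; ring.
Qed.

Section FiniteSupport.
Variables (n : nat) (b : nat -> C).
Hypothesis b_eq0 : forall t, (n <= t)%nat -> b t = RtoC 0.

Lemma taylor_l2_bounded : exists K, l2_bounded (taylor b) K.
Proof.
  set (c := fun m => match m with O => 1 | S k => 2 + 2 * Cmod (b k) ^ 2 end).
  assert (Hc0 : forall m, 0 <= c m)
    by (intros [|k]; simpl; [lra|pose proof (pow2_ge_0 (Cmod (b k))); lra]).
  exists (1 + rsum c (S n)); split; [pose proof (rsum_ge0 c (S n) Hc0); lra|].
  intros a Ha; apply sq_norm_modify_head; [exact Ha| |exact Hc0|].
  - intros [|k] Hk; [lia|]; simpl; rewrite b_eq0 by lia; ring.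
  - intros [|k] _; simpl; [rewrite Rmult_1_l; apply Cmod2_le_sq_norm, Ha|].
    apply (Rle_trans _ _ _ (Cmod2_plus_le _ _)); rewrite Cmod2_mult.
    pose proof (Cmod2_le_sq_norm a k Ha); pose proof (Cmod2_le_sq_norm a (S k) Ha).
    pose proof (pow2_ge_0 (Cmod (b k))); nra.
Qed.

Lemma taylor_inv_l2_bounded : exists K, l2_bounded (taylor_inv b) K.
Proof.
  set (c := fix c m := match m with O => 1 | S k => 2 + 2 * Cmod (b k) ^ 2 * c k end).
  assert (Hc0 : forall m, 0 <= c m).
  { induction m; simpl; [lra|]; pose proof (pow2_ge_0 (Cmod (b m))); nra. }
  exists (1 + rsum c (S n)); split; [pose proof (rsum_ge0 c (S n) Hc0); lra|].
  intros a Ha; apply sq_norm_modify_head; [exact Ha| |exact Hc0|].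
  - intros [|k] Hk; [lia|]; simpl; rewrite b_eq0 by lia; ring.
  - intros m _; induction m; simpl; [rewrite Rmult_1_l; apply Cmod2_le_sq_norm, Ha|].
    apply (Rle_trans _ _ _ (Cmod2_minus_le _ _)); rewrite Cmod2_mult.
    pose proof (Cmod2_le_sq_norm a (S m) Ha); pose proof (pow2_ge_0 (Cmod (b m))); nra.
Qed.

Lemma in_l2_taylor a : in_l2 a -> in_l2 (taylor b a).
Proof. destruct taylor_l2_bounded as [K [_ HK]]; intros Ha; apply HK, Ha. Qed.

Lemma in_l2_taylor_inv a : in_l2 a -> in_l2 (taylor_inv b a).
Proof. destruct taylor_inv_l2_bounded as [K [_ HK]]; intros Ha; apply HK, Ha. Qed.

Lemma represents_iff c z w : represents b c z w <-> is_series (fun m => taylor b c m * z ^ m)%C w.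
Proof.
  assert (Hpartial : forall N, (n <= N)%nat ->
    sum_n (fun m => c m * fbasis b m z)%C N = sum_n (fun m => taylor b c m * z ^ m)%C N).
  { intros N HN; rewrite taylor_partial_sum, (b_eq0 N HN), Cmult_0_r, Cmult_0_l, Cplus_0_r.
    reflexivity. }
  split; intros H; (eapply filterlim_ext_loc; [exists n|exact H]); intros N HN; simpl;
    [|symmetry]; apply Hpartial, HN.
Qed.

Variable S : seqC -> seqC.
Hypothesis S_n_shift : is_n_shift b S.

Lemma n_shift_eq a : in_l2 a -> S a = taylor_inv b (shift (taylor b a)).
Proof.
  intros Ha; destruct (S_n_shift a Ha) as [HSa Hrep].
  set (E := sub_seq (taylor b (S a)) (shift (taylor b a))).
  assert (HE : in_l2 E).
  { apply in_l2_sub; [apply in_l2_taylor, HSa|].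
    destruct shift_l2_bounded as [_ Hsh]; apply Hsh, in_l2_taylor, Ha. }
  assert (E_eq0 : forall m, E m = RtoC 0).
  { apply power_series_eq0_coef; [exact HE|]; intros x Hx.
    assert (Hz : Cmod x < 1) by (rewrite Cmod_R, Rabs_pos_eq; lra).
    destruct (ex_series_power_l2 (taylor b a) x (in_l2_taylor a Ha) Hz) as [w Hw].
    assert (HSw := proj1 (represents_iff _ _ _) (Hrep _ _ Hz (proj2 (represents_iff _ _ _) Hw))).
    pose proof (is_series_minus _ _ _ _ HSw (is_series_power_shift _ _ _ Hw)) as Hdiff.
    match goal with |- is_series _ ?l => replace l with (plus (x * w)%C (opp (x * w)%C)) end.
    - eapply is_series_ext; [|exact Hdiff].
      intros k; unfold E, sub_seq.
      change (taylor b (S a) k * x ^ k + - (shift (taylor b a) k * x ^ k)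
              = (taylor b (S a) k - shift (taylor b a) k) * x ^ k)%C; ring.
    - change (x * w + - (x * w) = 0)%C; ring. }
  rewrite <- (taylorK b (S a)); f_equal; apply functional_extensionality; intros m.
  specialize (E_eq0 m); unfold E, sub_seq in E_eq0.
  replace (taylor b (S a) m)
    with (taylor b (S a) m - shift (taylor b a) m + shift (taylor b a) m)%C by ring.
  rewrite E_eq0; ring.
Qed.

End FiniteSupport.

(** * Operators commuting with the shift *)

Section ShiftCommutant.
Variables (Y : seqC -> seqC) (CY : R).
Hypothesis Y_bounded : l2_bounded Y CY.
Hypothesis Y_add : forall a c, in_l2 a -> in_l2 c -> Y (add_seq a c) = add_seq (Y a) (Y c).
Hypothesis Y_scal : forall l a, in_l2 a -> Y (scal_seq l a) = scal_seq l (Y a).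
Hypothesis Y_shift : forall a, in_l2 a -> Y (shift a) = shift (Y a).

Lemma in_l2_Y a : in_l2 a -> in_l2 (Y a).
Proof. intros Ha; apply Y_bounded, Ha. Qed.

Lemma sq_norm_Y_le a : in_l2 a -> sq_norm (Y a) <= CY * sq_norm a.
Proof. intros Ha; apply Y_bounded, Ha. Qed.

Lemma Y_zero : Y zero_seq = zero_seq.
Proof.
  replace zero_seq with (scal_seq (RtoC 0) zero_seq) at 1
    by (apply functional_extensionality; intros; unfold scal_seq, zero_seq; ring).
  rewrite Y_scal by apply in_l2_zero.
  apply functional_extensionality; intros; unfold scal_seq, zero_seq; ring.
Qed.

Lemma Y_sub a c : in_l2 a -> in_l2 c -> Y (sub_seq a c) = sub_seq (Y a) (Y c).
Proof.
  intros Ha Hc; replace (sub_seq a c) with (add_seq a (scal_seq (RtoC (-1)) c))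
    by (apply functional_extensionality; intros; unfold add_seq, sub_seq, scal_seq; ring).
  rewrite Y_add, Y_scal by (try apply in_l2_scal; assumption).
  apply functional_extensionality; intros; unfold add_seq, sub_seq, scal_seq; ring.
Qed.

Lemma Y_shiftn d a : in_l2 a -> Y (shiftn d a) = shiftn d (Y a).
Proof.
  intros Ha; induction d; [rewrite !shiftn_0; reflexivity|].
  rewrite !shiftn_S, Y_shift, IHd; [reflexivity|].
  apply (shiftn_l2_bounded d), Ha.
Qed.

Definition symbol : seqC := Y delta0.

Lemma in_l2_symbol : in_l2 symbol.
Proof. apply in_l2_Y, in_l2_delta0. Qed.

Lemma Y_trunc N a i :
  Y (trunc N a) i = csum (fun j => if (j <=? i)%nat then (a j * symbol (i - j)%nat)%C else RtoC 0) N.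
Proof.
  induction N.
  - replace (trunc 0 a) with zero_seq by (apply functional_extensionality; reflexivity).
    rewrite Y_zero; reflexivity.
  - rewrite trunc_S, Y_add, Y_scal, Y_shiftn;
      [|apply in_l2_delta0|apply (shiftn_l2_bounded N), in_l2_delta0|apply in_l2_trunc
       |apply in_l2_scal, (shiftn_l2_bounded N), in_l2_delta0].
    unfold add_seq, scal_seq, shiftn; cbn [csum]; rewrite IHN; fold symbol.
    destruct (Nat.leb_spec N i); ring.
Qed.

Definition fejer_coef (K d : nat) : C := (RtoC (INR (K - d) / INR K) * symbol d)%C.

(* The Fejer (Cesaro) means of the power series [sum_d symbol d z^d], applied to [h]. *)
Definition fejer (K : nat) (h : seqC) : seqC :=
  fun i => csum (fun d => fejer_coef K d * shiftn d h i)%C K.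

Definition window (K a : nat) (h : seqC) : seqC :=
  fun j => if andb (a <? j + K)%nat (j <=? a)%nat then h j else RtoC 0.

Lemma window_finite_support K a h M : (S a <= M)%nat ->
  in_l2 (window K a h) /\ sq_norm (window K a h) = rsum (fun m => Cmod (window K a h m) ^ 2) M.
Proof.
  intros HM; apply in_l2_finite_support; intros m Hm; unfold window.
  destruct (Nat.leb_spec m a); [lia|]; rewrite Bool.andb_false_r; reflexivity.
Qed.

Lemma trunc_window K a h : trunc (S a) (window K a h) = window K a h.
Proof.
  apply functional_extensionality; intros m; unfold trunc, window.
  destruct (Nat.ltb_spec m (S a)), (Nat.leb_spec m a); try lia; try reflexivity.
  rewrite Bool.andb_false_r; reflexivity.
Qed.

Lemma Y_window K s h i :
  Y (window K (i + s) h) i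
  = csum (fun j => if (i + s <? j + K)%nat then (h j * symbol (i - j)%nat)%C else RtoC 0) (S i).
Proof.
  rewrite <- trunc_window, Y_trunc.
  replace (S (i + s)) with (S i + s)%nat by lia; rewrite csum_split, (csum_0 _ s), Cplus_0_r.
  - apply csum_ext; intros j Hj; unfold window.
    destruct (Nat.leb_spec j i), (Nat.leb_spec j (i + s)), (Nat.ltb_spec (i + s) (j + K));
      try lia; simpl; ring.
  - intros t _; destruct (Nat.leb_spec (S i + t) i); [lia|reflexivity].
Qed.

(* At coordinate [i], [K * fejer K h] is the sum of [Y] over the windows [(i + s - K, i + s]] of [h],
   [s < K], since [i - d] lies in [K - d] of them.  This bounds the Fejer means uniformly in [K]. *)
Lemma fejer_window_sum K h i : (0 < K)%nat ->
  (RtoC (INR K) * fejer K h i)%C = csum (fun s => Y (window K (i + s) h) i) K.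
Proof.
  intros HK; assert (HKr : INR K <> 0) by (apply not_0_INR; lia).
  set (G := fun d => (RtoC (INR (K - d)) * (h (i - d)%nat * symbol d))%C).
  rewrite (csum_ext _ _ _ (fun s _ => Y_window K s h i)), csum_switch.
  transitivity (csum (fun j => G (i - j)%nat) (S i)).
  2: { apply csum_ext; intros j Hj.
       rewrite (csum_ext _ (fun s => if (s <? K - (i - j))%nat
                                     then (h j * symbol (i - j)%nat)%C else RtoC 0)).
       - rewrite csum_indicator_lt, csum_const; unfold G.
         replace (i - (i - j))%nat with j by lia.
         replace (Nat.min K (K - (i - j))) with (K - (i - j))%nat by lia.
         ring.
       - intros s _; destruct (Nat.ltb_spec (i + s) (j + K)), (Nat.ltb_spec s (K - (i - j)));
           try lia; reflexivity. }
  rewrite csum_rev, (csum_ext G (fun d => if (d <? K)%nat then G d else RtoC 0)).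
  2: { intros d _; destruct (Nat.ltb_spec d K); [reflexivity|].
       unfold G; replace (K - d)%nat with O by lia; simpl; ring. }
  rewrite csum_indicator_lt; unfold fejer; rewrite <- csum_scal.
  rewrite (csum_ext _ (fun d => if (d <? S i)%nat then G d else RtoC 0)), csum_indicator_lt.
  - f_equal; lia.
  - intros d _; unfold fejer_coef, shiftn, G.
    destruct (Nat.ltb_spec d (S i)), (Nat.leb_spec d i); try lia; [|ring].
    transitivity (RtoC (INR K * (INR (K - d) / INR K)) * (h (i - d)%nat * symbol d))%C;
      [rewrite RtoC_mult; ring|].
    f_equal; f_equal; field; exact HKr.
Qed.

Lemma fejer_Cmod2_le K h i : (0 < K)%nat ->
  Cmod (fejer K h i) ^ 2 <= / INR K * rsum (fun s => Cmod (Y (window K (i + s) h) i) ^ 2) K.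
Proof.
  intros HK; assert (HKpos : 0 < INR K) by (apply lt_0_INR; lia).
  pose proof (csum_Cmod2_le (fun s => Y (window K (i + s) h) i) K) as Hcs.
  rewrite <- fejer_window_sum, Cmod2_mult, Cmod2_R in Hcs by exact HK.
  apply (Rmult_le_reg_l (INR K ^ 2)); [nra|].
  rewrite <- Rmult_assoc; replace (INR K ^ 2 * / INR K) with (INR K) by (field; lra); exact Hcs.
Qed.

Lemma rsum_window_Cmod2_le K h j A :
  rsum (fun a => Cmod (window K a h j) ^ 2) A <= INR K * Cmod (h j) ^ 2.
Proof.
  rewrite (rsum_ext _ (fun a => if andb (j <=? a)%nat (a <? j + K)%nat then Cmod (h j) ^ 2 else 0)).
  - apply (Rle_trans _ (rsum (fun a => if andb (j <=? a)%nat (a <? j + K)%nat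
                                       then Cmod (h j) ^ 2 else 0) (A + (j + K)))).
    + apply rsum_le_mono; [|lia]; intros a; destruct (andb _ _); [apply pow2_ge_0|lra].
    + rewrite rsum_indicator_window, rsum_const by lia; lra.
  - intros a _; unfold window.
    destruct (Nat.ltb_spec a (j + K)), (Nat.leb_spec j a); simpl; try rewrite Cmod_0; ring.
Qed.

Lemma fejer_l2_bounded K : l2_bounded (fejer K) CY.
Proof.
  destruct Y_bounded as [CY_ge0 _]; split; [exact CY_ge0|]; intros h Hh.
  destruct (Nat.eq_dec K 0) as [->|HK].
  { change (fejer 0 h) with zero_seq; destruct in_l2_zero as [Hzero ->]; split; [exact Hzero|].
    apply Rmult_le_pos; [exact CY_ge0|apply sq_norm_ge0, Hh]. }
  assert (HKpos : 0 < INR K) by (apply lt_0_INR; lia).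
  assert (HKinv : 0 <= / INR K) by (left; apply Rinv_0_lt_compat, HKpos).
  apply sq_norm_rsum_bounded; intros N.
  set (f := fun a i => Cmod (Y (window K a h) i) ^ 2).
  assert (Hf0 : forall a i, 0 <= f a i) by (intros; apply pow2_ge_0).
  apply (Rle_trans _ (/ INR K * rsum (fun i => rsum (fun s => f (i + s)%nat i) K) N)).
  { rewrite <- rsum_scal; apply rsum_le; intros; apply fejer_Cmod2_le; lia. }
  rewrite (rsum_ext (fun i => rsum (fun s => f (i + s)%nat i) K)
             (fun i => rsum (fun a => if andb (i <=? a)%nat (a <? i + K)%nat then f a i else 0) (N + K)))
    by (intros i Hi; symmetry; apply (rsum_indicator_window (fun a => f a i)); lia).
  rewrite rsum_switch.
  assert (Hwindow : forall a, (a < N + K)%nat ->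
    rsum (fun i => if andb (i <=? a)%nat (a <? i + K)%nat then f a i else 0) N
    <= CY * rsum (fun j => Cmod (window K a h j) ^ 2) (N + K)).
  { intros a Ha; destruct (window_finite_support K a h (N + K) Ha) as [Hw Hnorm].
    apply (Rle_trans _ (rsum (f a) N)).
    { apply rsum_le; intros i _; destruct (andb _ _); [lra|apply Hf0]. }
    apply (Rle_trans _ (sq_norm (Y (window K a h)))); [apply rsum_le_sq_norm, in_l2_Y, Hw|].
    rewrite <- Hnorm; apply sq_norm_Y_le, Hw. }
  apply (Rle_trans _ (/ INR K * (CY * rsum (fun j => INR K * Cmod (h j) ^ 2) (N + K)))).
  { apply Rmult_le_compat_l; [exact HKinv|].
    apply (Rle_trans _ (rsum (fun a => CY * rsum (fun j => Cmod (window K a h j) ^ 2) (N + K)) (N + K)));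
      [apply rsum_le, Hwindow|].
    rewrite rsum_scal, rsum_switch; apply Rmult_le_compat_l; [exact CY_ge0|].
    apply rsum_le; intros j _; apply rsum_window_Cmod2_le. }
  rewrite rsum_scal; pose proof (rsum_le_sq_norm h (N + K) Hh).
  replace (/ INR K * (CY * (INR K * rsum (fun j => Cmod (h j) ^ 2) (N + K))))
    with (CY * rsum (fun j => Cmod (h j) ^ 2) (N + K)) by (field; lra).
  apply Rmult_le_compat_l; assumption.
Qed.

Lemma fejer_add K a c : fejer K (add_seq a c) = add_seq (fejer K a) (fejer K c).
Proof.
  apply functional_extensionality; intros i; unfold fejer, add_seq; rewrite <- csum_plus.
  apply csum_ext; intros d _; unfold shiftn; destruct (d <=? i)%nat; ring.
Qed.

Lemma fejer_sub K a c : fejer K (sub_seq a c) = sub_seq (fejer K a) (fejer K c).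
Proof.
  apply functional_extensionality; intros i; unfold fejer, sub_seq; rewrite <- csum_minus.
  apply csum_ext; intros d _; unfold shiftn; destruct (d <=? i)%nat; ring.
Qed.

Lemma fejer_scal K l a : fejer K (scal_seq l a) = scal_seq l (fejer K a).
Proof.
  apply functional_extensionality; intros i; unfold fejer, scal_seq; rewrite <- csum_scal.
  apply csum_ext; intros d _; unfold shiftn; destruct (d <=? i)%nat; ring.
Qed.

Lemma fejer_shiftn K N a : fejer K (shiftn N a) = shiftn N (fejer K a).
Proof.
  apply functional_extensionality; intros i.
  change (shiftn N (fejer K a) i) with (if (N <=? i)%nat then fejer K a (i - N)%nat else RtoC 0).
  unfold fejer.
  destruct (Nat.leb_spec N i).
  - apply csum_ext; intros d _; unfold shiftn.
    destruct (Nat.leb_spec d i), (Nat.leb_spec N (i - d)), (Nat.leb_spec d (i - N)); try lia; try ring.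
    replace (i - d - N)%nat with (i - N - d)%nat by lia; ring.
  - apply csum_0; intros d _; unfold shiftn.
    destruct (Nat.leb_spec d i), (Nat.leb_spec N (i - d)); try lia; ring.
Qed.

Lemma fejer_delta0 K i : fejer K delta0 i = if (i <? K)%nat then fejer_coef K i else RtoC 0.
Proof.
  unfold fejer; rewrite <- csum_indicator_eq; apply csum_ext; intros d _; unfold shiftn, delta0.
  destruct (Nat.leb_spec d i), (Nat.eqb_spec (i - d) 0), (Nat.eqb_spec d i); try lia; ring.
Qed.

Lemma in_l2_fejer K h : in_l2 h -> in_l2 (fejer K h).
Proof. intros Hh; apply (fejer_l2_bounded K), Hh. Qed.

Lemma fejer_delta0_sub_Cmod2_le K D i : (0 < K)%nat -> (D <= K)%nat ->
  Cmod (sub_seq (fejer K delta0) symbol i) ^ 2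
  <= INR D / INR K * Cmod (symbol i) ^ 2 + (if (i <? D)%nat then 0 else Cmod (symbol i) ^ 2).
Proof.
  intros HK HDK; assert (HKpos : 0 < INR K) by (apply lt_0_INR; lia).
  assert (HDK0 : 0 <= INR D / INR K) by (apply Rdiv_le_0_compat; [apply pos_INR|lra]).
  pose proof (pow2_ge_0 (Cmod (symbol i))) as Hf.
  unfold sub_seq; rewrite fejer_delta0; destruct (Nat.ltb_spec i K).
  - set (t := INR i / INR K).
    assert (Ht0 : 0 <= t) by (apply Rdiv_le_0_compat; [apply pos_INR|lra]).
    assert (Hle : forall j, (j <= K)%nat -> INR j / INR K <= 1)
      by (intros j Hj; unfold Rdiv; rewrite <- (Rinv_r (INR K)) by lra;
          apply Rmult_le_compat_r; [left; apply Rinv_0_lt_compat, HKpos|apply le_INR, Hj]).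
    assert (Ht1 : t <= 1) by (apply Hle; lia).
    assert (HtD : (i < D)%nat -> t <= INR D / INR K)
      by (intros; apply Rmult_le_compat_r; [left; apply Rinv_0_lt_compat, HKpos|apply le_INR; lia]).
    replace (fejer_coef K i - symbol i)%C with (RtoC (- t) * symbol i)%C.
    2: { unfold fejer_coef, t; rewrite minus_INR by lia.
         replace ((INR K - INR i) / INR K) with (1 + - (INR i / INR K)) by (field; lra).
         rewrite RtoC_plus; ring. }
    rewrite Cmod2_mult, Cmod2_R.
    pose proof (Rmult_le_pos _ _ HDK0 Hf).
    destruct (Nat.ltb_spec i D) as [HiD|HiD].
    + specialize (HtD HiD); rewrite Rplus_0_r; apply Rmult_le_compat_r; [exact Hf|nra].
    + assert ((- t) ^ 2 * Cmod (symbol i) ^ 2 <= 1 * Cmod (symbol i) ^ 2)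
        by (apply Rmult_le_compat_r; [exact Hf|nra]).
      lra.
  - destruct (Nat.ltb_spec i D); [lia|].
    replace (0 - symbol i)%C with (RtoC (-1) * symbol i)%C by ring.
    rewrite Cmod2_mult, Cmod2_R; nra.
Qed.

Lemma fejer_delta0_cvg : l2_cvg (fun K => fejer K delta0) symbol.
Proof.
  intros eps Heps; set (f := fun i => Cmod (symbol i) ^ 2).
  destruct (Series_minus_rsum_small f (eps / 2) in_l2_symbol) as [D HD]; [lra|].
  change (Series f) with (sq_norm symbol) in HD.
  pose proof (sq_norm_ge0 _ in_l2_symbol) as Hsym0.
  destruct (INR_unbounded (2 * INR D * sq_norm symbol / eps)) as [K1 HK1].
  exists (Nat.max (Nat.max K1 D) 1); intros K HK.
  assert (HKpos : 0 < INR K) by (apply lt_0_INR; lia).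
  assert (HK1K : INR K1 <= INR K) by (apply le_INR; lia).
  assert (HDK : INR D / INR K * sq_norm symbol <= eps / 2).
  { apply (Rmult_le_reg_r (2 * INR K / eps)); [apply Rdiv_lt_0_compat; lra|].
    replace (INR D / INR K * sq_norm symbol * (2 * INR K / eps)) with (2 * INR D * sq_norm symbol / eps)
      by (field; lra).
    replace (eps / 2 * (2 * INR K / eps)) with (INR K) by (field; lra); lra. }
  apply sq_norm_rsum_bounded; intros M.
  apply (Rle_trans _ (rsum (fun i => INR D / INR K * f i + (if (i <? D)%nat then 0 else f i)) M)).
  { apply rsum_le; intros i _; apply fejer_delta0_sub_Cmod2_le; lia. }
  rewrite rsum_plus, rsum_scal.
  pose proof (rsum_tail_le_sq_norm symbol D M in_l2_symbol).
  assert (INR D / INR K * rsum f M <= INR D / INR K * sq_norm symbol).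
  { apply Rmult_le_compat_l; [apply Rdiv_le_0_compat; [apply pos_INR|lra]|].
    apply rsum_le_sq_norm, in_l2_symbol. }
  unfold f in *; lra.
Qed.

Lemma fejer_trunc_cvg N h : l2_cvg (fun K => fejer K (trunc N h)) (Y (trunc N h)).
Proof.
  induction N; intros eps Heps.
  - exists O; intros K _.
    replace (trunc 0 h) with zero_seq by (apply functional_extensionality; reflexivity).
    rewrite Y_zero.
    replace (sub_seq (fejer K zero_seq) zero_seq) with zero_seq.
    + rewrite (proj2 in_l2_zero); lra.
    + apply functional_extensionality; intros i; unfold sub_seq, fejer, zero_seq.
      rewrite csum_0; [ring|]; intros d _; unfold shiftn; destruct (d <=? i)%nat; ring.
  - pose proof (pow2_ge_0 (Cmod (h N))) as Hc; set (c := Cmod (h N) ^ 2) in *.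
    destruct (IHN (eps / 4)) as [K1 HK1]; [lra|].
    destruct (fejer_delta0_cvg (eps / (4 * (c + 1)))) as [K2 HK2]; [apply Rdiv_lt_0_compat; lra|].
    exists (Nat.max K1 K2); intros K HK.
    specialize (HK1 K ltac:(lia)); specialize (HK2 K ltac:(lia)).
    assert (Hdelta : in_l2 (shiftn N delta0)) by apply (shiftn_l2_bounded N), in_l2_delta0.
    assert (Hstep : sub_seq (fejer K (trunc (S N) h)) (Y (trunc (S N) h)) =
      add_seq (sub_seq (fejer K (trunc N h)) (Y (trunc N h)))
              (scal_seq (h N) (shiftn N (sub_seq (fejer K delta0) symbol)))).
    { rewrite trunc_S, fejer_add, fejer_scal, fejer_shiftn, Y_add, Y_scal, Y_shiftn;
        [|apply in_l2_delta0|exact Hdelta|apply in_l2_trunc|apply in_l2_scal, Hdelta].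
      apply functional_extensionality; intros i; unfold sub_seq, add_seq, scal_seq, shiftn, symbol.
      destruct (N <=? i)%nat; ring. }
    rewrite Hstep.
    assert (Hl1 : in_l2 (sub_seq (fejer K (trunc N h)) (Y (trunc N h))))
      by (apply in_l2_sub; [apply in_l2_fejer|apply in_l2_Y]; apply in_l2_trunc).
    assert (Hl2 : in_l2 (sub_seq (fejer K delta0) symbol))
      by (apply in_l2_sub; [apply in_l2_fejer, in_l2_delta0|apply in_l2_symbol]).
    destruct (shiftn_l2_bounded N) as [_ Hsh]; destruct (Hsh _ Hl2) as [Hl3 H3].
    destruct (in_l2_scal (h N) _ Hl3) as [Hl4 H4].
    destruct (in_l2_add _ _ Hl1 Hl4) as [_ H5].
    assert (c * sq_norm (sub_seq (fejer K delta0) symbol) <= eps / 4).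
    { apply (Rle_trans _ ((c + 1) * (eps / (4 * (c + 1))))); [|right; field; lra].
      apply Rmult_le_compat; [exact Hc|apply sq_norm_ge0, Hl2|lra|exact HK2]. }
    fold c in H4; nra.
Qed.

Lemma fejer_cvg h : in_l2 h -> l2_cvg (fun K => fejer K h) (Y h).
Proof.
  (* [h] is close to some [trunc N h], on which the means converge, and [fejer K] and [Y] are
     bounded uniformly in [K]. *)
  intros Hh eps Heps; destruct Y_bounded as [CY_ge0 _].
  set (delta := eps / (12 * (CY + 1))).
  assert (Hdelta : 0 < delta) by (apply Rdiv_lt_0_compat; lra).
  destruct (Series_minus_rsum_small (fun i => Cmod (h i) ^ 2) delta Hh Hdelta) as [N HN].
  destruct (sq_norm_sub_trunc N h Hh) as [Htail Htail_le].
  set (r := sub_seq h (trunc N h)) in *.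
  assert (Hr : sq_norm r <= delta)
    by (change (sq_norm h) with (Series (fun i => Cmod (h i) ^ 2)) in Htail_le; lra).
  destruct (fejer_trunc_cvg N h (eps / 8)) as [K0 HK0]; [lra|].
  exists K0; intros K HK; specialize (HK0 K HK).
  assert (Hdecomp : sub_seq (fejer K h) (Y h) =
    add_seq (fejer K r) (sub_seq (sub_seq (fejer K (trunc N h)) (Y (trunc N h))) (Y r))).
  { unfold r; rewrite fejer_sub, Y_sub by (auto using in_l2_trunc).
    apply functional_extensionality; intros i; unfold sub_seq, add_seq; ring. }
  rewrite Hdecomp.
  destruct (fejer_l2_bounded K) as [_ HT]; destruct (HT r Htail) as [HA HAle].
  assert (HB : in_l2 (sub_seq (fejer K (trunc N h)) (Y (trunc N h))))
    by (apply in_l2_sub; [apply in_l2_fejer|apply in_l2_Y]; apply in_l2_trunc).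
  destruct (in_l2_sub _ _ HB (in_l2_Y _ Htail)) as [HBC HBCle].
  destruct (in_l2_add _ _ HA HBC) as [_ Htot].
  pose proof (sq_norm_Y_le r Htail).
  assert (CY * sq_norm r <= CY * delta) by (apply Rmult_le_compat_l; lra).
  assert (6 * (CY * delta) <= eps / 2).
  { unfold delta; apply (Rmult_le_reg_r (12 * (CY + 1))); [lra|].
    replace (6 * (CY * (eps / (12 * (CY + 1)))) * (12 * (CY + 1))) with (6 * CY * eps) by (field; lra).
    nra. }
  lra.
Qed.

End ShiftCommutant.

(** * Hyperinvariance *)

Lemma bounded_operator_l2_bounded X : bounded_operator X -> exists K, l2_bounded X K.
Proof.
  intros [Hl2 [_ [_ [K HK]]]]; exists (Rmax K 0); split; [apply Rmax_r|]; intros a Ha.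
  split; [apply Hl2, Ha|]; apply (Rle_trans _ _ _ (HK a Ha)).
  apply Rmult_le_compat_r; [apply sq_norm_ge0, Ha|apply Rmax_l].
Qed.

Lemma l2_cvg_map T K u a : l2_bounded T K ->
  (forall x y, T (sub_seq x y) = sub_seq (T x) (T y)) ->
  (forall k, in_l2 (sub_seq (u k) a)) -> l2_cvg u a -> l2_cvg (fun k => T (u k)) (T a).
Proof.
  intros [HK HT] Tsub Hl2 Hcvg eps Heps.
  destruct (Hcvg (eps / (K + 1))) as [K0 HK0]; [apply Rdiv_lt_0_compat; lra|].
  exists K0; intros k Hk; rewrite <- Tsub.
  apply (Rle_trans _ _ _ (proj2 (HT _ (Hl2 k)))).
  apply (Rle_trans _ (K * (eps / (K + 1)))); [apply Rmult_le_compat_l; auto|].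
  apply (Rmult_le_reg_r (K + 1)); [lra|]; field_simplify; nra.
Qed.

Lemma closed_subspace_csum M (F : nat -> seqC) K : closed_subspace M ->
  (forall d, (d < K)%nat -> M (F d)) -> M (fun i => csum (fun d => F d i) K).
Proof.
  intros [_ [M0 [Madd _]]]; induction K; intros HF; [exact M0|].
  apply (Madd (fun i => csum (fun d => F d i) K) (F K)); [apply IHK; intros; apply HF|apply HF]; lia.
Qed.

Lemma closed_subspace_l2_cvg M u a : closed_subspace M -> (forall k, M (u k)) -> in_l2 a ->
  (forall k, in_l2 (sub_seq (u k) a)) -> l2_cvg u a -> M a.
Proof.
  intros HM Hu Ha Hl2 Hcvg; apply (proj2 (proj2 (proj2 (proj2 HM))) u a Hu Ha).
  apply l2_cvg_is_lim_seq; assumption.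
Qed.

Section Conjugation.
Variables (n : nat) (b : nat -> C) (S X : seqC -> seqC).
Hypothesis b_eq0 : forall t, (n <= t)%nat -> b t = RtoC 0.
Hypothesis S_n_shift : is_n_shift b S.
Hypothesis X_bounded : bounded_operator X.
Hypothesis X_S : forall a, in_l2 a -> X (S a) = S (X a).

(* With [V := taylor b], [conj_taylor] is [V X V^-1] and [fejer_approx K h] is [p_K(S_n) h]. *)
Definition conj_taylor (a : seqC) : seqC := taylor b (X (taylor_inv b a)).

Lemma conj_taylor_l2_bounded : exists K, l2_bounded conj_taylor K.
Proof.
  destruct (taylor_l2_bounded n b b_eq0) as [K1 H1].
  destruct (bounded_operator_l2_bounded X X_bounded) as [K2 H2].
  destruct (taylor_inv_l2_bounded n b b_eq0) as [K3 H3].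
  exists (K1 * (K2 * K3)); exact (l2_bounded_comp _ _ _ _ H1 (l2_bounded_comp _ _ _ _ H2 H3)).
Qed.

Lemma conj_taylor_add a c : in_l2 a -> in_l2 c ->
  conj_taylor (add_seq a c) = add_seq (conj_taylor a) (conj_taylor c).
Proof.
  intros Ha Hc; unfold conj_taylor.
  rewrite taylor_inv_add, (proj1 (proj2 X_bounded)), taylor_add;
    [reflexivity|apply (in_l2_taylor_inv n b b_eq0); assumption..].
Qed.

Lemma conj_taylor_scal l a : in_l2 a -> conj_taylor (scal_seq l a) = scal_seq l (conj_taylor a).
Proof.
  intros Ha; unfold conj_taylor.
  rewrite taylor_inv_scal, (proj1 (proj2 (proj2 X_bounded))), taylor_scal;
    [reflexivity|apply (in_l2_taylor_inv n b b_eq0), Ha].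
Qed.

Lemma conj_taylor_shift a : in_l2 a -> conj_taylor (shift a) = shift (conj_taylor a).
Proof.
  intros Ha; unfold conj_taylor.
  assert (Ha' := in_l2_taylor_inv n b b_eq0 _ Ha).
  rewrite <- (taylor_invK b a) at 1; rewrite <- (n_shift_eq n b b_eq0 S S_n_shift) by exact Ha'.
  rewrite X_S, (n_shift_eq n b b_eq0 S S_n_shift), taylor_invK by (try apply X_bounded; exact Ha').
  reflexivity.
Qed.

Lemma iter_n_shift h d : in_l2 h ->
  in_l2 (Nat.iter d S h) /\ Nat.iter d S h = taylor_inv b (shiftn d (taylor b h)).
Proof.
  intros Hh; induction d as [|d [Hl2 Heq]]; [rewrite shiftn_0, taylorK; auto|].
  simpl Nat.iter; split; [apply S_n_shift, Hl2|].
  rewrite (n_shift_eq n b b_eq0 S S_n_shift) by exact Hl2.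
  rewrite Heq, taylor_invK, shiftn_S; reflexivity.
Qed.

Definition fejer_approx (K : nat) (h : seqC) : seqC :=
  taylor_inv b (fejer conj_taylor K (taylor b h)).

Lemma fejer_approx_in M K h : closed_subspace M -> invariant S M -> M h -> M (fejer_approx K h).
Proof.
  intros HM HMS Hh; unfold fejer_approx, fejer; rewrite taylor_inv_csum.
  apply closed_subspace_csum; [exact HM|]; intros d _.
  change (M (taylor_inv b (scal_seq (fejer_coef conj_taylor K d) (shiftn d (taylor b h))))).
  rewrite taylor_inv_scal; apply HM.
  assert (Hl2 : in_l2 h) by (apply HM, Hh).
  rewrite <- (proj2 (iter_n_shift h d Hl2)).
  induction d; [exact Hh|apply HMS, IHd].
Qed.

Lemma fejer_approx_cvg h : in_l2 h ->
  (forall K, in_l2 (sub_seq (fejer_approx K h) (X h))) /\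
  l2_cvg (fun K => fejer_approx K h) (X h).
Proof.
  intros Hl2; destruct conj_taylor_l2_bounded as [CY HY].
  destruct (taylor_inv_l2_bounded n b b_eq0) as [Ki HKi].
  assert (Ht : in_l2 (taylor b h)) by apply (in_l2_taylor n b b_eq0), Hl2.
  assert (HXh : X h = taylor_inv b (conj_taylor (taylor b h)))
    by (unfold conj_taylor; rewrite !taylorK; reflexivity).
  assert (Hdiff : forall K,
    in_l2 (sub_seq (fejer conj_taylor K (taylor b h)) (conj_taylor (taylor b h)))).
  { intros K; apply in_l2_sub; [eapply in_l2_fejer|apply HY];
      eauto using conj_taylor_add, conj_taylor_scal, conj_taylor_shift. }
  rewrite HXh; unfold fejer_approx; split.
  - intros K; rewrite <- taylor_inv_sub; apply (in_l2_taylor_inv n b b_eq0), Hdiff.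
  - apply (l2_cvg_map _ Ki _ _ HKi (taylor_inv_sub b) Hdiff).
    eapply fejer_cvg; eauto using conj_taylor_add, conj_taylor_scal, conj_taylor_shift.
Qed.

End Conjugation.

Theorem theorem5p1 (n : nat) (b : nat -> C) (S : seqC -> seqC)
  (Hn : (1 <= n)%nat)
  (Hb : forall t, (n <= t)%nat -> b t = RtoC 0)
  (HS : is_n_shift b S)
  (M : seqC -> Prop) (HM : closed_subspace M) (HMS : invariant S M) :
  forall X : seqC -> seqC, bounded_operator X ->
    (forall a, in_l2 a -> X (S a) = S (X a)) ->
    invariant X M.
Proof.
  (* The argument works for every [n]. *)
  intros X HX HXS h Hh.
  assert (Hl2 : in_l2 h) by (apply HM, Hh).
  destruct (fejer_approx_cvg n b S X Hb HS HX HXS h Hl2) as [Hdiff Hcvg].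
  apply (closed_subspace_l2_cvg M (fun K => fejer_approx b X K h));
    [exact HM| |apply HX, Hl2|exact Hdiff|exact Hcvg].
  intros K; apply (fejer_approx_in n b S X Hb HS); assumption.
Qed.
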